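(* Let $n\geq 1$ and $k\geq 2$ be integers with $f_k\leq n\leq f_{k+1}$, and let $A^{(n)}=\{1,2,\dots,n\}$. The vertex $v$ of the Fibonacci-sum set-graph $G^F_{A^{(n)}}$ corresponding to the full set $A^{(n)}$ has the maximum number of loops among all vertices, and \[ l(v)=\begin{cases} n+\frac{f_k+1}{2}-\frac{\lfloor 4(k+1)/3\rfloor}{2}, & \text{if } n\leq \frac{f_{k+2}}{2},\\[2pt] 2n+\frac{f_k+1}{2}-\frac{\lfloor 4(k+1)/3\rfloor}{2}-\left\lceil \frac{f_{k+2}-1}{2}\right\rceil, & \text{if } n>\frac{f_{k+2}}{2}.\end{cases} \]
   Context: Let $\mathcal{F}=\{f_m\}_{m\ge 0}$ be the Fibonacci numbers, $f_0=0$, $f_1=1$, $f_m=f_{m-1}+f_{m-2}$. The Fibonacci-sum set-graph $G^F_{A^{(n)}}$ is the multigraph (loops and multiple edges allowed) whose vertices are in bijection with the nonempty subsets of $A^{(n)}=\{1,\dots,n\}$; between the vertices corresponding to distinct subsets $S,T$ there is one edge for each pair $(i',j')$ with $i'\in S$, $j'\in T$, $i'\neq j'$ and $i'+j'\in\mathcal{F}$, and at the vertex corresponding to $S$ there is one loop for each pair of distinct elements $i',j'\in S$ with $i'+j'\in\mathcal{F}$. For a vertex $v$, $l(v)$ denotes its number of loops. *)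

From mathcomp Require Import all_boot all_order all_algebra.
Set Implicit Arguments. Unset Strict Implicit. Unset Printing Implicit Defensive.

Fixpoint fib (m : nat) : nat :=
  match m with
  | 0 => 0
  | 1 => 1
  | (p.+1 as q).+1 => fib q + fib p
  end.

(* m is a Fibonacci number.  Since fib i >= i - 1, any index i with
   fib i = m satisfies i < m.+2, so the bounded search is exact. *)
Definition is_fib (m : nat) : bool := [exists i : 'I_(m.+2), fib i == m].

(* The ground set A^(n) = {1,...,n}, seen inside 'I_(n.+1) = {0,...,n}. *)
Definition Aset (n : nat) : {set 'I_n.+1} := [set i : 'I_n.+1 | 0 < i].

(* Number of loops at the vertex corresponding to S: number of unordered
   pairs {i,j} of distinct elements of S with i + j Fibonacci
   (counted as ordered pairs with i < j). *)
Definition loops (n : nat) (S : {set 'I_n.+1}) : nat :=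
  #|[set p : 'I_n.+1 * 'I_n.+1 |
      [&& p.1 \in S, p.2 \in S, (p.1 < p.2)%N & is_fib (p.1 + p.2)]]|.

From mathcomp Require Import all_boot all_order all_algebra zify lra.
Import Order.TTheory GRing.Theory Num.Theory.

(* A loop at S is a pair i < j in S with i + j a Fibonacci number, so the
   loop count is monotone in S and the full set A^(n) carries the most loops.
   Count the loops of A^(n) by their larger element m.  If
   fib k <= m < fib k.+1, every sum i + m with 0 < i < m lies strictly between
   fib k and fib k.+3, so only fib k.+1 and fib k.+2 can occur, and m has
   [fib k.+1 < 2m] + [fib k.+2 < 2m] partners.  Summing level by level, the
   constant term jumps by 2 - odd (fib k.+2) whenever m reaches fib k.+1;
   since fib j is odd exactly when 3 does not divide j, these jumps add up to
   floor (4 (k + 1) / 3). *)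

Lemma fibSS j : fib j.+2 = fib j.+1 + fib j.
Proof. by []. Qed.

Lemma leq_fib : {homo fib : i j / i <= j}.
Proof.
by apply: (homo_leq leqnn leq_trans) => -[|j] //; rewrite fibSS leq_addr.
Qed.

Lemma fib_gt0 j : 0 < j -> 0 < fib j.
Proof. exact: (@leq_fib 1). Qed.

Lemma fibS_le_double j : 0 < j -> fib j.+1 <= (fib j).*2.
Proof. by case: j => // j _; rewrite fibSS -addnn leq_add2l leq_fib. Qed.

Lemma ltn_fibS j : 1 < j -> fib j < fib j.+1.
Proof. by case: j => [|[|j]] // _; rewrite (fibSS j.+1); have := @fib_gt0 j.+1 isT; lia. Qed.

Lemma fib_index_le j : j <= fib j.+1.
Proof.
elim: j => [|[|j] IH] //; rewrite fibSS.
by have := @fib_gt0 j.+1 isT; lia.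
Qed.

Lemma is_fibP x : reflect (exists j, fib j = x) (is_fib x).
Proof.
apply: (iffP existsP) => [[i /eqP <-]|[j fj_x]]; first by exists i.
have j_lt : j < x.+2 by case: j fj_x => // j <-; exact: fib_index_le.
by exists (Ordinal j_lt); rewrite fj_x.
Qed.

Lemma odd_fib j : odd (fib j) = (j %% 3 != 0).
Proof.
suff: odd (fib j) = (j %% 3 != 0) /\ odd (fib j.+1) = (j.+1 %% 3 != 0) by case.
elim: j => [|j [IHj IHj1]]; split => //.
rewrite fibSS oddD IHj IHj1 -[j.+2]addn2 -[j.+1]addn1 -modnDml -(modnDml j 2).
by case: (j %% 3) (ltn_pmod j (isT : 0 < 3)) => [|[|[|]]].
Qed.

Lemma is_fib_window k x : fib k < x < fib k.+3 ->
  is_fib x = (x == fib k.+1) || (x == fib k.+2).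
Proof.
move=> /andP[lo hi].
apply/is_fibP/orP => [[j fj_x]|[]/eqP->]; [|by exists k.+1|by exists k.+2].
have k_lt_j : k < j by rewrite ltnNge; apply/negP => /leq_fib; lia.
have j_lt : j < k.+3 by rewrite ltnNge; apply/negP => /leq_fib; lia.
rewrite -fj_x; have [->|->] : j = k.+1 \/ j = k.+2 by lia.
- by left.
- by right.
Qed.

Lemma sum_ord_eq2 m a b :
  \sum_(i < m) ((i == a :> nat) + (i == b :> nat)) = (a < m) + (b < m).
Proof.
rewrite big_split /= -!big_mkcond /= !(big_ord1_eq _ (fun=> 1)).
by do 2 case: ltnP.
Qed.

Definition fib_partners m := \sum_(i < m) ((0 < i) && is_fib (i + m)).

Lemma fib_partners_level k m : fib k <= m < fib k.+1 ->
  fib_partners m = (fib k.+1 < m.*2) + (fib k.+2 < m.*2).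
Proof.
case: k => [|k] /andP[lo hi].
  have -> : m = 0 by move: hi => /=; lia.
  by rewrite /fib_partners big_ord0.
have fk2_lt_fk3 := @ltn_fibS k.+2 isT.
have summandE (i : 'I_m) : ((0 < i) && is_fib (i + m) : nat) =
    (i == fib k.+2 - m :> nat) + (i == fib k.+3 - m :> nat).
  have i_lt_m := ltn_ord i.
  have [->|i_gt0] := posnP i; first by lia.
  have fk4E := fibSS k.+2; rewrite (@is_fib_window k.+1); lia.
by rewrite /fib_partners (eq_bigr _ (fun i _ => summandE i)) sum_ord_eq2; lia.
Qed.

Lemma loops_subset n (S T : {set 'I_n.+1}) : S \subset T -> loops S <= loops T.
Proof.
move=> /subsetP sST; apply/subset_leq_card/subsetP => p.
by rewrite !inE => /and4P[/sST-> /sST-> -> ->].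
Qed.

Lemma loops_Aset n : loops (Aset n) = \sum_(j < n.+1) fib_partners j.
Proof.
have -> : loops (Aset n) = \sum_(i < n.+1) \sum_(j < n.+1)
    [&& 0 < i, 0 < j, i < j & is_fib (i + j)].
  rewrite pair_bigA /loops -sum1_card big_mkcond /=.
  by apply: eq_bigr => p _; rewrite !inE.
rewrite exchange_big; apply: eq_bigr => j _.
rewrite /fib_partners (big_ord_widen _ (fun i => (0 < i) && is_fib (i + j) : nat)
  (ltnW (ltn_ord j))) [RHS]big_mkcond /=.
apply: eq_bigr => i _; case: (ltnP i j) => [i_lt_j|_]; last by rewrite !andbF.
by rewrite (leq_ltn_trans (leq0n i) i_lt_j).
Qed.

Lemma sum_fib_partners k n : 2 <= k -> fib k <= n < fib k.+1 ->
  (\sum_(j < n.+1) fib_partners j).*2 + (4 * k.+1) %/ 3 =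
    n.*2 + fib k + 1 + (n - (fib k.+2)./2).*2.
Proof.
elim: n k => [|n IH] k k_ge2 /andP[lo hi]; first by have := @fib_gt0 k (ltnW k_ge2); lia.
have -> : \sum_(j < n.+2) fib_partners j =
    \sum_(j < n.+1) fib_partners j + fib_partners n.+1 by rewrite big_ord_recr.
have [fk_lt|fk_eq] : fib k < n.+1 \/ fib k = n.+1 by lia.
  have n_level : fib k <= n < fib k.+1 by lia.
  have := IH k k_ge2 n_level; have := fibS_le_double k (ltnW k_ge2).
  rewrite (@fib_partners_level k) ?lo ?hi //.
  by case: (ltnP (fib k.+1)); case: (ltnP (fib k.+2)); lia.
case: k k_ge2 fk_eq {lo hi} => [|[|[|k]]] // _ fk_eq.
  have -> : n = 0 by move: fk_eq => /= [<-].
  by rewrite big_ord1 /fib_partners !big_ord_recr !big_ord0.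
have fk2_lt_fk3 := @ltn_fibS k.+2 isT.
have n_level : fib k.+2 <= n < fib k.+3 by lia.
have := IH k.+2 isT n_level.
rewrite (@fib_partners_level k.+3); last by rewrite -fk_eq leqnn ltn_fibS.
have := odd_fib k.+4; have := fibSS k.+2; have := fibSS k.+3.
by case: (ltnP (fib k.+4)); case: (ltnP (fib k.+1.+4)); lia.
Qed.

Lemma ceil_pred_half (R : archiRealFieldType) m :
  (Num.ceil ((m%:R - 1) / 2 : R) = (m./2)%:Z)%R.
Proof.
have mE : (m%:R = (odd m)%:R + 2 * (m./2)%:R :> R)%R.
  by rewrite -natrM mul2n -natrD odd_double_half.
apply: ceil_def; rewrite intrB -pmulrn mE.
by case: (odd m) => /=; apply/andP; split; lra.
Qed.

Theorem theorem2p5 (n k : nat) :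
  (1 <= n)%N -> (2 <= k)%N -> (fib k <= n)%N -> (n < fib k.+1)%N ->
  (forall S : {set 'I_n.+1}, S \subset Aset n -> S != set0 ->
     (loops S <= loops (Aset n))%N) /\
  ((loops (Aset n))%:R : rat) =
    (if (n.*2 <= fib k.+2)%N then
       n%:R + (fib k + 1)%:R / 2 - ((4 * k.+1) %/ 3)%:R / 2
     else
       (n.*2)%:R + (fib k + 1)%:R / 2 - ((4 * k.+1) %/ 3)%:R / 2
       - (Num.ceil (((fib k.+2)%:R - 1) / 2 : rat))%:~R)%R.
Proof.
move=> _ k_ge2 lo hi; split=> [S S_sub _|]; first exact: loops_subset.
have n_level : fib k <= n < fib k.+1 by rewrite lo hi.
have := @sum_fib_partners k n k_ge2 n_level; rewrite -loops_Aset.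
case: leqP => [n_small|n_large].
  rewrite (_ : n - _ = 0); last by lia.
  move/(congr1 (fun x => x%:R : rat)); rewrite !natrD -!muln2 !natrM; lra.
have h_le_n : (fib k.+2)./2 <= n by lia.
rewrite ceil_pred_half -pmulrn; move/(congr1 (fun x => x%:R : rat)).
rewrite !natrD -!muln2 !natrM natrB //; lra.
Qed.
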